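(* Let $n=2k$ with $k\ge 2$. Then $W=\{c_1,v\}$ is a local resolving set of $U_n$, where $v=e_1$ if $k=2$, $v=c_2$ if $k=3$, $v=d_4$ if $k=4$, and $v=c_k$ if $k\ge 5$.
   Context: For $n\ge 3$, $U_n$ is the graph with vertex set $\{a_i,b_i,c_i,d_i,e_i : 1\le i\le n\}$ and edge set $\{a_ia_{i+1}, b_ib_{i+1}, e_ie_{i+1}, a_ib_i, b_ic_i, c_id_i, d_ie_i, c_{i+1}d_i : 1\le i\le n\}$, indices taken modulo $n$. A vertex $w$ resolves $u,v$ if $d(u,w)\neq d(v,w)$ ($d$ the graph distance). A set $W$ is a local resolving set if every two adjacent vertices are resolved by some element of $W$. *)

From mathcomp Require Import all_boot.
Set Implicit Arguments. Unset Strict Implicit. Unset Printing Implicit Defensive.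

Fixpoint ball (T : finType) (e : rel T) (k : nat) (x : T) : {set T} :=
  match k with
  | 0 => [set x]
  | k'.+1 => let B := ball e k' x in B :|: [set y | [exists z in B, e z y]]
  end.

(* Graph distance: least k such that y is within k steps of x.  In a
   connected graph on T the distance is < #|T|, so searching in
   0 .. #|T|-1 is exact (unreachable vertices would get value #|T|). *)
Definition gdist (T : finType) (e : rel T) (x y : T) : nat :=
  find (fun k => y \in ball e k x) (iota 0 #|T|).

Definition resolves (T : finType) (e : rel T) (w u v : T) : bool :=
  gdist e u w != gdist e v w.

Definition local_resolving (T : finType) (e : rel T) (W : {set T}) : Prop :=
  forall u v : T, e u v -> exists2 w, w \in W & resolves e w u v.

(* Vertices of U_n: pairs (kind, index).  kind 0,1,2,3,4 stands for
   a,b,c,d,e; index j : 'I_n stands for the paper's index j+1. *)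
Definition UV (n : nat) := ('I_5 * 'I_n)%type.

Definition lab (n : nat) (t i : nat) (x : UV n) : bool :=
  (nat_of_ord x.1 == t) && ((nat_of_ord x.2).+1 == i).

Definition Uedge0 (n : nat) (u v : UV n) : bool :=
  let a := nat_of_ord u.1 in let b := nat_of_ord v.1 in
  let i := nat_of_ord u.2 in let j := nat_of_ord v.2 in
  [|| [&& a == 0, b == 0 & j == i.+1 %% n],
      [&& a == 1, b == 1 & j == i.+1 %% n],
      [&& a == 4, b == 4 & j == i.+1 %% n],
      [&& a == 0, b == 1 & j == i],
      [&& a == 1, b == 2 & j == i],
      [&& a == 2, b == 3 & j == i],
      [&& a == 3, b == 4 & j == i]
    | [&& a == 3, b == 2 & j == i.+1 %% n]].

Definition Uadj (n : nat) : rel (UV n) := fun u v => Uedge0 u v || Uedge0 v u.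

From mathcomp Require Import all_boot zify.
Set Implicit Arguments. Unset Strict Implicit. Unset Printing Implicit Defensive.

(* Distances from a vertex c_s have a closed form [cdist]: measured from c_1 it
   is certified by a shortest-path tree, and a rotation of U_n carries c_s to
   c_1.  For k >= 5 the closed forms for c_1 and c_k (whose indices differ by
   k - 1) are compared on each of the eight edge types of U_n.  For k <= 4 the
   graph has at most 40 vertices: distances to the second vertex of W are given
   by a checked table and every edge is then inspected by computation. *)

Section GraphDistance.
Variables (T : finType) (e : rel T).

Lemma mem_ballS k x y :
  (y \in ball e k.+1 x) = (y \in ball e k x) || [exists z in ball e k x, e z y].
Proof. by rewrite /= !inE. Qed.

Lemma ball_cons k x z y : e x z -> y \in ball e k z -> y \in ball e k.+1 x.
Proof.
move=> exz; elim: k y => [|k IHk] y.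
  by rewrite /= !inE => /eqP->; apply/orP; right; apply/existsP; exists x; rewrite inE eqxx.
rewrite (mem_ballS k z) (mem_ballS k.+1 x) => /orP[/IHk->//|/existsP[z' /andP[/IHk z'B ez'y]]].
by apply/orP; right; apply/existsP; exists z'; rewrite z'B.
Qed.

Lemma gdist_mono (f : T -> T) : injective f -> {mono f : x y / e x y} ->
  forall x y, gdist e (f x) (f y) = gdist e x y.
Proof.
move=> f_inj f_mono x y; have [g fK gK] := injF_bij f_inj.
suff ball_f k z : (f z \in ball e k (f x)) = (z \in ball e k x).
  by apply: eq_find => k; rewrite ball_f.
elim: k z => [|k IHk] z; first by rewrite /= !inE (inj_eq f_inj).
rewrite !mem_ballS IHk; congr orb; apply/existsP/existsP => -[z' /andP[z'B ez'z]].
  by exists (g z'); rewrite -IHk -f_mono !gK z'B.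
by exists (f z'); rewrite IHk f_mono z'B.
Qed.

Hypothesis e_sym : symmetric e.

Lemma mem_ball_sym k x y : (y \in ball e k x) = (x \in ball e k y).
Proof.
have ball_sym : forall x' y', y' \in ball e k x' -> x' \in ball e k y'.
  elim: k => [|k IHk] x' y'; first by rewrite /= !inE => /eqP->.
  rewrite mem_ballS => /orP[/IHk xB|/existsP[z /andP[/IHk zB ezy]]].
    by rewrite mem_ballS xB.
  by apply: ball_cons zB; rewrite e_sym.
by apply/idP/idP; apply: ball_sym.
Qed.

Lemma gdist_sym x y : gdist e x y = gdist e y x.
Proof. by apply: eq_find => k; exact: mem_ball_sym. Qed.

Lemma find_iota_leq c m N : m <= c < m + N -> find (leq c) (iota m N) = c - m.
Proof.
elim: N m => [|N IHN] m; first by rewrite addn0; lia.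
move=> /andP[le_mc lt_c] /=; case: leqP => [|lt_mc]; first lia.
by rewrite IHN; lia.
Qed.

Lemma gdist_potential (w : T) (f : T -> nat) :
  f w = 0 ->
  (forall z y, e z y -> f y <= (f z).+1) ->
  (forall y, y != w -> exists2 z, e z y & (f z).+1 = f y) ->
  (forall y, f y < #|T|) ->
  forall y, gdist e y w = f y.
Proof.
move=> fw0 f_lip f_pred f_lt y.
have ballE k z : (z \in ball e k w) = (f z <= k).
  elim: k z => [|k IHk] z.
    rewrite /= inE leqn0; apply/eqP/eqP => [->//|fz0].
    by apply/eqP/negPn/negP => /f_pred[z' _]; rewrite fz0.
  rewrite mem_ballS IHk; apply/orP/idP => [[|/existsP[z' /andP]]|le_fz]; first lia.
    by rewrite IHk => -[le_fz' /f_lip]; lia.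
  have [|lt_k] := leqP (f z) k; [by left | right].
  have [z' ez'z fz'] : exists2 z', e z' z & (f z').+1 = f z.
    by apply: f_pred; apply: contraTneq lt_k => ->; rewrite fw0.
  by apply/existsP; exists z'; rewrite IHk ez'z andbT; lia.
rewrite gdist_sym /gdist (eq_find (a2 := leq (f y))); last by move=> k; rewrite ballE.
by rewrite find_iota_leq ?subn0 ?f_lt.
Qed.

Lemma local_resolving_pair (W : {set T}) (w1 w2 : T) : w1 \in W -> w2 \in W ->
  (forall u v, e u v -> resolves e w1 u v || resolves e w2 u v) -> local_resolving e W.
Proof.
by move=> w1W w2W res u v /res/orP[]; [exists w1 | exists w2].
Qed.

Section Certificates.
Variables (s : seq T) (s_uniq : uniq s) (mem_s : forall x, x \in s).

Definition potential_check (w : T) (f : T -> nat) : bool :=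
  [&& f w == 0,
      all (fun z => all (fun y => e z y ==> (f y <= (f z).+1)) s) s,
      all (fun y => (y == w) || has (fun z => e z y && ((f z).+1 == f y)) s) s
    & all (fun y => f y < size s) s].

Lemma gdist_potential_check w f : potential_check w f -> forall y, gdist e y w = f y.
Proof.
case/and4P=> /eqP fw0 /allP f_lip /allP f_pred /allP f_lt.
have size_s : size s <= #|T| by rewrite cardE uniq_leq_size // => x _; rewrite mem_enum.
apply: gdist_potential => // [z y ezy|y y_neq_w|y].
- by move/allP/(_ y (mem_s y))/implyP: (f_lip z (mem_s z)); apply.
- move: (f_pred y (mem_s y)); rewrite (negbTE y_neq_w) => /hasP[z _ /andP[ezy /eqP]].
  by exists z.
- exact: leq_trans (f_lt y (mem_s y)) size_s.
Qed.

Lemma local_resolving_check (W : {set T}) (w1 w2 : T) (f g : T -> nat) :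
  w1 \in W -> w2 \in W ->
  (forall y, gdist e y w1 = f y) -> (forall y, gdist e y w2 = g y) ->
  all (fun u => all (fun v => e u v ==> (f u != f v) || (g u != g v)) s) s ->
  local_resolving e W.
Proof.
move=> w1W w2W dist_w1 dist_w2 /allP check.
apply: (local_resolving_pair w1W w2W) => u v euv.
move/allP/(_ v (mem_s v))/implyP: (check u (mem_s u)).
by rewrite /resolves !dist_w1 !dist_w2; apply.
Qed.

End Certificates.

End GraphDistance.

Lemma modnS_small i n : i < n -> i.+1 %% n = if i.+1 == n then 0 else i.+1.
Proof. by move=> lt_in; case: eqP => [->|ne]; rewrite ?modnn ?modn_small //; lia. Qed.

Lemma modn_pred_small i n : i < n -> (i + n).-1 %% n = if i == 0 then n.-1 else i.-1.
Proof.
move=> lt_in; case: eqP => [->|ne]; first by rewrite modn_small //; lia.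
by rewrite -subn1 -addnBAC ?lt0n ?modnDr ?modn_small; lia.
Qed.

Lemma modnDS i c n : ((i.+1 %% n) + c) %% n = ((i + c) %% n).+1 %% n.
Proof. by rewrite modnDml -[in RHS]addn1 modnDml addn1 addSn. Qed.

Lemma eqn_modD_small n c i j : i < n -> j < n -> ((j + c) %% n == (i + c) %% n) = (j == i).
Proof. by move=> lt_in lt_jn; rewrite eqn_modDr !modn_small. Qed.

Lemma eqn_modDS_small n c i j : j < n ->
  ((j + c) %% n == ((i + c) %% n).+1 %% n) = (j == i.+1 %% n).
Proof. by move=> lt_jn; rewrite -addn1 modnDml addn1 -addSn eqn_modDr (modn_small lt_jn). Qed.

Lemma Uadj_sym n : symmetric (@Uadj n).
Proof. by move=> u v; rewrite /Uadj orbC. Qed.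

Definition kb : 'I_5 := @Ordinal 5 1 isT.
Definition kc : 'I_5 := @Ordinal 5 2 isT.
Definition kd : 'I_5 := @Ordinal 5 3 isT.
Definition ke : 'I_5 := @Ordinal 5 4 isT.

(* The distance from c_1 to the vertex of kind [t] (a, b, c, d, e = 0, ..., 4)
   with 0-based index [i]: [m] is the distance from [i] to 0 on the cycle Z_n,
   and [m'] the smaller of that for [i] and [i.+1], as d_i touches c_i and c_{i+1}. *)
Definition cdist (n t i : nat) : nat :=
  let m := minn i (n - i) in let m' := minn i (n.-1 - i) in
  match t with
  | 0 => m + 2
  | 1 => m + 1
  | 2 => minn (2 * m) (m + 2)
  | 3 => minn (2 * m').+1 (m' + 3)
  | _ => m' + 2
  end.

(* A neighbour of [x] one step closer to c_1: a shortest-path tree rooted at c_1. *)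
Definition cparent n (x : UV n) : UV n :=
  let: (t, i) := x in
  let m := minn i (n - i) in let m' := minn i (n.-1 - i) in
  match nat_of_ord t with
  | 0 => (kb, i)
  | 1 => if i == 0 :> nat then (kc, i)
         else if i <= n - i then (kb, ord_pred i) else (kb, ordS i)
  | 2 => if 2 <= m then (kb, i)
         else if i <= n - i then (kd, ord_pred i) else (kd, i)
  | 3 => if 2 <= m' then (ke, i)
         else if i <= n.-1 - i then (kc, i) else (kc, ordS i)
  | _ => if m' == 0 then (kd, i)
         else if i <= n.-1 - i then (ke, ord_pred i) else (ke, ordS i)
  end.

Lemma ord_predS n (i : 'I_n) : (ord_pred i).+1 %% n = i.
Proof. by rewrite -[in RHS](ord_predK i). Qed.

Lemma Uadj_cparent n (y : UV n) : Uadj (cparent y) y.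
Proof.
case: y => [[t lt_t5] i]; rewrite /Uadj /Uedge0.
case: t lt_t5 => [|[|[|[|[|t]]]]] lt_t5 //=;
  by repeat case: ifP => _; rewrite /= ?ord_predS ?eqxx ?orbT.
Qed.

Lemma cdist_cparent n (y : UV n) : ~~ lab 2 1 y ->
  (cdist n (cparent y).1 (cparent y).2).+1 = cdist n y.1 y.2.
Proof.
case: y => [[t lt_t5] i]; rewrite /lab /=; have lt_in := ltn_ord i.
case: t lt_t5 => [|[|[|[|[|t]]]]] lt_t5 //= y_neq_c1;
  repeat case: ifP => /= ?; rewrite ?modnS_small ?modn_pred_small // /cdist;
  repeat case: eqP => /= ?; lia.
Qed.

Lemma cdist_Uedge0 n (u v : UV n) : Uedge0 u v ->
  cdist n v.1 v.2 <= (cdist n u.1 u.2).+1 /\ cdist n u.1 u.2 <= (cdist n v.1 v.2).+1.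
Proof.
case: u v => [a i] [b j]; have lt_in := ltn_ord i; rewrite /Uedge0 /=.
repeat case/orP; case/and3P => /eqP-> /eqP-> /eqP->;
  rewrite ?modnS_small // /cdist; try case: eqP => ?; lia.
Qed.

Lemma cdist_Uadj n (z y : UV n) : Uadj z y -> cdist n y.1 y.2 <= (cdist n z.1 z.2).+1.
Proof. by case/orP => /cdist_Uedge0[]. Qed.

Lemma cdist_lt n t i : 0 < n -> cdist n t i < 5 * n.
Proof. by move=> n_gt0; rewrite /cdist; case: t => [|[|[|[|t]]]]; lia. Qed.

Lemma lab_inj n t i (x y : UV n) : lab t i x -> lab t i y -> x = y.
Proof.
case: x y => [t1 i1] [t2 i2]; rewrite /lab /=.
move=> /andP[/eqP t1E /eqP i1E] /andP[/eqP t2E /eqP i2E].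
by congr pair; apply: ord_inj; lia.
Qed.

Lemma gdist_c1 n (w : UV n) : lab 2 1 w -> forall y, gdist (@Uadj n) y w = cdist n y.1 y.2.
Proof.
move=> w_c1 y; have n_gt0 : 0 < n := leq_ltn_trans (leq0n _) (ltn_ord w.2).
apply: (gdist_potential (@Uadj_sym n) (f := fun y : UV n => cdist n y.1 y.2))
  => [|z y'|y' y'_neq_w|y'].
- by case/andP: w_c1 => /eqP-> /eqP[->]; rewrite /cdist; lia.
- exact: cdist_Uadj.
- exists (cparent y'); first exact: Uadj_cparent.
  by apply: cdist_cparent; apply: contra y'_neq_w => /lab_inj/(_ w_c1)->.
- by rewrite card_prod !card_ord cdist_lt.
Qed.

Fact ord_shift_subproof n s (i : 'I_n) : (i + (n - s)) %% n < n.
Proof. by rewrite ltn_pmod // (leq_ltn_trans _ (ltn_ord i)). Qed.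

Definition Ushift n s (x : UV n) : UV n := (x.1, Ordinal (ord_shift_subproof s x.2)).

Lemma Ushift_inj n s : injective (@Ushift n s).
Proof.
move=> [a i] [b j] [-> /eqP]; rewrite /= eqn_modD_small // => /eqP ij.
by congr pair; apply: val_inj.
Qed.

Lemma Uadj_shift n s : {mono @Ushift n s : u v / Uadj u v}.
Proof.
have Uedge0_shift u v : Uedge0 (Ushift s u) (Ushift s v) = Uedge0 u v.
  by case: u v => [a i] [b j]; rewrite /Uedge0 /= !eqn_modD_small ?eqn_modDS_small.
by move=> u v; rewrite /Uadj !Uedge0_shift.
Qed.

Lemma gdist_c n s (w : UV n) : lab 2 s.+1 w -> forall y,
  gdist (@Uadj n) y w = cdist n y.1 ((y.2 + (n - s)) %% n).
Proof.
case/andP=> w1 /eqP[w2] y; rewrite -w2 -(gdist_mono (@Ushift_inj n w.2) (@Uadj_shift n w.2)).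
by apply: gdist_c1; rewrite /lab /= w1 subnKC ?modnn // ltnW.
Qed.

Lemma cdist_Uedge0_resolves n k (u v : UV n) : 5 <= k -> n = k.*2 -> Uedge0 u v ->
  (cdist n u.1 u.2 != cdist n v.1 v.2) ||
  (cdist n u.1 ((u.2 + k.+1) %% n) != cdist n v.1 ((v.2 + k.+1) %% n)).
Proof.
rewrite -mul2n => k_ge5 n2k; case: u v => [a [i lt_in]] [b [j lt_jn]]; rewrite /Uedge0 /=.
have r_spec : (i + k.+1) %% n = i + k.+1 /\ i < k.-1 \/
              (i + k.+1) %% n = i - k.-1 /\ k.-1 <= i.
  case: (ltnP i k.-1) => h; [left|right]; split=> //.
    by rewrite modn_small; lia.
  have -> : i + k.+1 = i - k.-1 + n by lia.
  by rewrite modnDr modn_small; lia.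
have lt_rn : (i + k.+1) %% n < n by rewrite ltn_pmod; lia.
set r := (i + k.+1) %% n in r_spec lt_rn *.
repeat case/orP; case/and3P => /eqP-> /eqP-> /eqP->; rewrite ?modnDS -/r; clearbody r;
  rewrite ?modnS_small // /cdist.
(* Each edge type is resolved by c_1 except for the indices singled out by the
   boolean, where c_k resolves it. *)
- by apply/orP; left; case: ifP => ?; lia.
- by apply/orP; left; case: ifP => ?; lia.
- case: (boolP ((i == k.-1) || (i == n.-1))) => ?; apply/orP; [right|left];
    repeat case: ifP => ?; lia.
- by apply/orP; left; lia.
- case: (boolP ((i == 1) || (i == n.-1))) => ?; apply/orP; [right|left]; lia.
- case: (boolP (k <= i <= n - 3)) => ?; apply/orP; [right|left]; lia.
- case: (boolP ((i == 1) || (i == n - 2))) => ?; apply/orP; [right|left]; lia.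
- case: (boolP (2 <= i <= k.-1)) => ?; apply/orP; [right|left];
    repeat case: ifP => ?; lia.
Qed.

Lemma resolves_c1_ck n k (w1 wk u v : UV n) : 5 <= k -> n = k.*2 ->
  lab 2 1 w1 -> lab 2 k wk -> Uadj u v ->
  resolves (@Uadj n) w1 u v || resolves (@Uadj n) wk u v.
Proof.
move=> k_ge5 n2k w1_c1 wk_ck uv.
have wk_ck' : lab 2 k.-1.+1 wk by rewrite prednK //; lia.
rewrite /resolves !(gdist_c1 w1_c1) !(gdist_c wk_ck').
have -> : n - k.-1 = k.+1 by lia.
case/orP: uv => /(cdist_Uedge0_resolves k_ge5 n2k) //.
by rewrite ![cdist n v.1 _ == _]eq_sym.
Qed.

Definition ord_seq n (n_gt0 : 0 < n) : seq 'I_n :=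
  [seq Ordinal (ltn_pmod i n_gt0) | i <- iota 0 n].

Lemma mem_ord_seq n (n_gt0 : 0 < n) (i : 'I_n) : i \in ord_seq n_gt0.
Proof.
apply/mapP; exists (val i); first by rewrite mem_iota add0n ltn_ord.
by apply: ord_inj; rewrite /= modn_small.
Qed.

Lemma ord_seq_uniq n (n_gt0 : 0 < n) : uniq (ord_seq n_gt0).
Proof.
rewrite map_inj_in_uniq ?iota_uniq // => i j; rewrite !mem_iota.
by move=> /andP[_ lt_in] /andP[_ lt_jn] [] /=; rewrite !modn_small.
Qed.

Definition Useq n (n_gt0 : 0 < n) : seq (UV n) :=
  [seq (t, i) | t <- ord_seq (isT : 0 < 5), i <- ord_seq n_gt0].

Lemma mem_Useq n (n_gt0 : 0 < n) (x : UV n) : x \in Useq n_gt0.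
Proof. by case: x => t i; apply: allpairs_f; apply: mem_ord_seq. Qed.

Lemma Useq_uniq n (n_gt0 : 0 < n) : uniq (Useq n_gt0).
Proof. by rewrite allpairs_uniq ?ord_seq_uniq // => -[? ?] [? ?]. Qed.

Definition table_dist n (tbl : seq nat) (y : UV n) : nat := nth 0 tbl (y.1 * n + y.2).

Lemma U4_local_resolving : local_resolving (@Uadj 4) [set x | lab 2 1 x || lab 4 1 x].
Proof.
have n_gt0 : 0 < 4 by [].
pose e1 : UV 4 := (ke, ord0).
pose dist_e1 : UV 4 -> nat := table_dist [:: 4; 4; 5; 5;
                                             3; 3; 4; 4;
                                             2; 2; 3; 3;
                                             1; 2; 3; 2;
                                             0; 1; 2; 1].
have gdist_e1 y : gdist (@Uadj 4) y e1 = dist_e1 y.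
  apply: (gdist_potential_check (@Uadj_sym 4) (Useq_uniq n_gt0) (mem_Useq n_gt0)).
  by vm_compute.
apply: (local_resolving_check (mem_Useq n_gt0) _ _ (gdist_c1 (w := (kc, ord0)) _) gdist_e1);
  by rewrite ?inE //; vm_compute.
Qed.

Lemma U6_local_resolving : local_resolving (@Uadj 6) [set x | lab 2 1 x || lab 2 2 x].
Proof.
have n_gt0 : 0 < 6 by [].
pose c2 : UV 6 := (kc, Ordinal (isT : 1 < 6)).
apply: (local_resolving_check (mem_Useq n_gt0) _ _
          (gdist_c1 (w := (kc, ord0)) _) (gdist_c (s := 1) (w := c2) _));
  by rewrite ?inE //; vm_compute.
Qed.

Lemma U8_local_resolving : local_resolving (@Uadj 8) [set x | lab 2 1 x || lab 3 4 x].
Proof.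
have n_gt0 : 0 < 8 by [].
pose d4 : UV 8 := (kd, Ordinal (isT : 3 < 8)).
pose dist_d4 : UV 8 -> nat := table_dist [:: 6; 5; 4; 3; 3; 4; 5; 6;
                                             5; 4; 3; 2; 2; 3; 4; 5;
                                             6; 5; 3; 1; 1; 3; 5; 6;
                                             5; 4; 2; 0; 2; 4; 5; 6;
                                             4; 3; 2; 1; 2; 3; 4; 5].
have gdist_d4 y : gdist (@Uadj 8) y d4 = dist_d4 y.
  apply: (gdist_potential_check (@Uadj_sym 8) (Useq_uniq n_gt0) (mem_Useq n_gt0)).
  by vm_compute.
apply: (local_resolving_check (mem_Useq n_gt0) _ _ (gdist_c1 (w := (kc, ord0)) _) gdist_d4);
  by rewrite ?inE //; vm_compute.
Qed.

Theorem lemma4p4 (n k : nat) (hk : 2 <= k) (hn : n = k.*2) :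
  local_resolving (@Uadj n)
    [set x : UV n | lab 2 1 x ||
       (if k == 2 then lab 4 1 x
        else if k == 3 then lab 2 2 x
        else if k == 4 then lab 3 4 x
        else lab 2 k x)].
Proof.
have [k_lt5 | k_ge5] := ltnP k 5.
  have : k = 2 \/ k = 3 \/ k = 4 by lia.
  case=> [|[|]] k_val; subst k n.
  - exact: U4_local_resolving.
  - exact: U6_local_resolving.
  - exact: U8_local_resolving.
have n_gt0 : 0 < n by lia.
have lt_k1n : k.-1 < n by lia.
pose c1 : UV n := (kc, Ordinal n_gt0).
pose ck : UV n := (kc, Ordinal lt_k1n).
have c1_c1 : lab 2 1 c1 by [].
have ck_ck : lab 2 k ck by rewrite /lab /= prednK //; lia.
apply: (local_resolving_pair (w1 := c1) (w2 := ck)) => [||u v]; rewrite ?inE.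
- by rewrite c1_c1.
- by rewrite !ifN_eq ?ck_ck ?orbT //; apply/eqP; lia.
- exact: resolves_c1_ck k_ge5 hn c1_c1 ck_ck.
Qed.
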